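(* Let $x,y>0$, $r,s\in\mathbb{R}$, and $F_{r,s;x,y}(w)=E(r+w,s+w;x,y)$ for $w\in\mathbb{R}$. Then for every $w\in\mathbb{R}$, $$\frac{F_{r,s;x,y}'(w)}{F_{r,s;x,y}(w)}=\frac{F_{r,s;x,y}'(-w-(s+r))}{F_{r,s;x,y}(-w-(s+r))} \quad\text{and}\quad F_{r,s;x,y}(w)\,F_{r,s;x,y}(-w)=\frac{xy\,F_{r,s;x,y}(w)}{F_{r,s;x,y}(w-(s+r))}.$$
   Context: For $x,y>0$ and $r,s\in\mathbb{R}$ the extended mean values are defined by $E(r,s;x,y)=\bigl(\frac{r}{s}\cdot\frac{y^s-x^s}{y^r-x^r}\bigr)^{1/(s-r)}$ if $rs(r-s)(x-y)\neq0$; $E(r,0;x,y)=E(0,r;x,y)=\bigl(\frac1r\cdot\frac{y^r-x^r}{\ln y-\ln x}\bigr)^{1/r}$ if $r(x-y)\neq0$; $E(r,r;x,y)=e^{-1/r}\bigl(\frac{x^{x^r}}{y^{y^r}}\bigr)^{1/(x^r-y^r)}$ if $r(x-y)\neq0$; $E(0,0;x,y)=\sqrt{xy}$ if $x\neq y$; $E(r,s;x,x)=x$. *)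

From Stdlib Require Import Reals Lra.
Open Scope R_scope.

Definition E (r s x y : R) : R :=
  if Req_EM_T x y then x
  else if Req_EM_T r 0 then
    (if Req_EM_T s 0 then sqrt (x * y)
     else Rpower ((1 / s) * ((Rpower y s - Rpower x s) / (ln y - ln x))) (1 / s))
  else if Req_EM_T s 0 then
    Rpower ((1 / r) * ((Rpower y r - Rpower x r) / (ln y - ln x))) (1 / r)
  else if Req_EM_T r s then
    exp (- (1 / r)) *
    Rpower (Rpower x (Rpower x r) / Rpower y (Rpower y r))
           (1 / (Rpower x r - Rpower y r))
  else
    Rpower ((r / s) * ((Rpower y s - Rpower x s) / (Rpower y r - Rpower x r)))
           (1 / (s - r)).

Definition F (r s x y : R) (w : R) : R := E (r + w) (s + w) x y.

(* For x <> y put a = ln x and c = ln y - ln x.  The key auxiliary function is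
   K u = (e^u - 1)/u, defined everywhere as the power series sum u^n/(n+1)!, hence
   smooth, positive, and satisfying the reflection law K(-u) = e^(-u) K(u).  With
   psi t = t a + ln K(t c) = ln ((y^t - x^t)/(t c)) every extended mean is an
   exponential of a difference quotient of psi:
     E(p,q;x,y) = exp ((psi q - psi p)/(q - p))   (p <> q),
     E(p,p;x,y) = exp (psi' p).
   The reflection law for K gives psi(-t) = psi t - t(2a + c), hence
   log E(-q,-p) = (2a + c) - log E(p,q), with exp (2a + c) = x y.

   Consequently L w = log F(w) is differentiable and satisfies
   L(-w-(s+r)) = ln(xy) - L w (trivially so when x = y).  Both identities of the
   theorem follow from this reflection law alone: differentiating it shows that
   F'/F = L' takes equal values at w and -w-(s+r), and applying it at -w shows
   F(-w) F(w-(s+r)) = x y. *)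

From Stdlib Require Import Reals Lra.
From Coquelicot Require Import Coquelicot.
Open Scope R_scope.

Lemma derivative_unique (f g : R -> R) (x l1 l2 : R) :
  (forall t, f t = g t) -> is_derive f x l1 -> is_derive g x l2 -> l1 = l2.
Proof.
  intros Hfg H1 H2.
  rewrite <- (is_derive_unique _ _ _ H1), <- (is_derive_unique _ _ _ H2).
  apply Derive_ext, Hfg.
Qed.

Definition exp_coef (n : nat) : R := / INR (Factorial.fact n).

(* d'Alembert's test: consecutive coefficients have ratio 1/(n+1) -> 0. *)
Lemma CV_radius_exp_coef : CV_radius exp_coef = p_infty.
Proof.
  apply CV_radius_infinite_DAlembert.
  - intro n; apply Rinv_neq_0_compat, INR_fact_neq_0.
  - apply is_lim_seq_ext with (fun n => / INR (S n)).
    + intro n; unfold exp_coef; rewrite fact_simpl, mult_INR.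
      assert (0 < INR (Factorial.fact n)) by apply INR_fact_lt_0.
      assert (0 < INR (S n)) by apply lt_0_INR, Nat.lt_0_succ.
      replace (/ (INR (S n) * INR (Factorial.fact n)) / / INR (Factorial.fact n))
        with (/ INR (S n)) by (field; lra).
      rewrite Rabs_pos_eq; [reflexivity|].
      apply Rlt_le, Rinv_0_lt_compat; lra.
    + replace (Finite 0) with (Rbar_inv p_infty) by reflexivity.
      apply is_lim_seq_inv; [|discriminate].
      apply (is_lim_seq_incr_1 INR p_infty), is_lim_seq_INR.
Qed.

(* K u = sum_n u^n/(n+1)! = (e^u - 1)/u, and its derivative dK, as power series. *)
Definition K_coef : nat -> R := PS_decr_1 exp_coef.
Definition K (u : R) : R := PSeries K_coef u.
Definition dK (u : R) : R := PSeries (PS_derive K_coef) u.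

Lemma K_coef_radius u : Rbar_lt (Rabs u) (CV_radius K_coef).
Proof. unfold K_coef; rewrite CV_radius_decr_1, CV_radius_exp_coef; exact I. Qed.

Lemma exp_K u : exp u = 1 + u * K u.
Proof.
  rewrite exp_Reals; fold exp_coef.
  rewrite PSeries_decr_1.
  - unfold exp_coef; simpl; rewrite Rinv_1; reflexivity.
  - apply CV_radius_inside; rewrite CV_radius_exp_coef; exact I.
Qed.

Lemma K_0 : K 0 = 1.
Proof. unfold K; rewrite PSeries_0; unfold K_coef, PS_decr_1, exp_coef; simpl; lra. Qed.

Lemma is_derive_K u : is_derive K u (dK u).
Proof. apply is_derive_PSeries, K_coef_radius. Qed.

Lemma ex_derive_dK u : ex_derive dK u.
Proof.
  apply ex_derive_PSeries; rewrite CV_radius_derive; apply K_coef_radius.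
Qed.

Lemma dK_0 : dK 0 = / 2.
Proof. unfold dK; rewrite PSeries_0; unfold PS_derive, K_coef, PS_decr_1, exp_coef; simpl; field. Qed.

Lemma ex_derive_K u : ex_derive K u.
Proof. exists (dK u); apply is_derive_K. Qed.

Lemma Derive_K u : Derive K u = dK u.
Proof. apply is_derive_unique, is_derive_K. Qed.

Lemma exp_dK u : exp u = K u + u * dK u.
Proof.
  apply (derivative_unique exp (fun v => 1 + v * K v) u).
  - exact exp_K.
  - apply is_derive_Reals, derivable_pt_lim_exp.
  - auto_derive; [apply ex_derive_K | rewrite Derive_K; ring].
Qed.

(* u K u = e^u - 1 has the sign of u, so K is positive and ln K is smooth. *)
Lemma K_pos u : 0 < K u.
Proof.
  destruct (Req_dec u 0) as [->|Hu]; [rewrite K_0; lra|].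
  assert (Hsign : 0 < u * (exp u - 1)).
  { destruct (Rlt_or_le 0 u).
    - assert (exp 0 < exp u) by (apply exp_increasing; lra).
      rewrite exp_0 in *; nra.
    - assert (exp u < exp 0) by (apply exp_increasing; lra).
      rewrite exp_0 in *; nra. }
  rewrite exp_K in Hsign.
  assert (0 < u * u) by (apply Rsqr_pos_lt; exact Hu).
  nra.
Qed.

(* The reflection law of K, source of all symmetries below. *)
Lemma K_opp u : K (- u) = exp (- u) * K u.
Proof.
  destruct (Req_dec u 0) as [->|Hu]; [rewrite Ropp_0, exp_0; ring|].
  assert (HKq : forall v, v <> 0 -> K v = (exp v - 1) / v)
    by (intros v Hv; rewrite exp_K; field; exact Hv).
  rewrite !HKq, exp_Ropp by lra.
  assert (0 < exp u) by apply exp_pos.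
  field; lra.
Qed.

(* With a = ln x and c = ln y - ln x, psi t = ln ((y^t - x^t)/(t c)) (see
   [Rpower_diff]); dpsi is its derivative. *)
Section LogPowerSum.
Variables a c : R.

Definition psi (t : R) : R := t * a + ln (K (t * c)).
Definition dpsi (t : R) : R := a + c * dK (t * c) / K (t * c).

Lemma is_derive_psi t : is_derive psi t (dpsi t).
Proof.
  unfold psi, dpsi. assert (HK := K_pos (t * c)).
  auto_derive; [repeat split; auto using ex_derive_K|].
  rewrite Derive_K; field; lra.
Qed.

Lemma ex_derive_dpsi t : ex_derive dpsi t.
Proof.
  unfold dpsi. assert (HK := K_pos (t * c)).
  auto_derive; repeat split; auto using ex_derive_K, ex_derive_dK; lra.
Qed.

Lemma psi_0 : psi 0 = 0.
Proof. unfold psi; rewrite !Rmult_0_l, K_0, ln_1; ring. Qed.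

Lemma psi_opp t : psi (- t) = psi t - t * (2 * a + c).
Proof.
  unfold psi. replace (- t * c) with (- (t * c)) by ring.
  rewrite K_opp, ln_mult, ln_exp by (apply exp_pos || apply K_pos). ring.
Qed.

Lemma ex_derive_psi t : ex_derive psi t.
Proof. exists (dpsi t); apply is_derive_psi. Qed.

Lemma Derive_psi t : Derive psi t = dpsi t.
Proof. apply is_derive_unique, is_derive_psi. Qed.

Lemma dpsi_opp t : dpsi (- t) = 2 * a + c - dpsi t.
Proof.
  assert (H : - dpsi (- t) = dpsi t - (2 * a + c)); [|lra].
  apply (derivative_unique (fun t => psi (- t)) (fun t => psi t - t * (2 * a + c)) t).
  - apply psi_opp.
  - auto_derive; [apply ex_derive_psi |].
    change (Derive (fun x : R => psi x)) with (Derive psi). rewrite Derive_psi; ring.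
  - auto_derive; [apply ex_derive_psi |].
    change (Derive (fun x : R => psi x)) with (Derive psi). rewrite Derive_psi; ring.
Qed.

(* logE p q is the logarithm of the extended mean E(p,q;x,y) for x <> y:
   a difference quotient of psi, or its derivative on the diagonal. *)
Definition logE (p q : R) : R :=
  if Req_EM_T p q then dpsi p else (psi q - psi p) / (q - p).

Lemma logE_opp p q : logE (- q) (- p) = 2 * a + c - logE p q.
Proof.
  unfold logE. destruct (Req_EM_T p q) as [<-|Hpq].
  - destruct (Req_EM_T (- p) (- p)) as [_|]; [apply dpsi_opp | lra].
  - destruct (Req_EM_T (- q) (- p)) as [|_]; [lra|].
    rewrite !psi_opp. field. lra.
Qed.

Lemma ex_derive_logE_shift r s w : ex_derive (fun w => logE (r + w) (s + w)) w.
Proof.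
  destruct (Req_dec r s) as [<-|Hrs].
  - apply (ex_derive_ext (fun w => dpsi (r + w))).
    + intro v; unfold logE; destruct (Req_EM_T (r + v) (r + v)); [reflexivity | lra].
    + auto_derive; apply ex_derive_dpsi.
  - apply (ex_derive_ext (fun w => (psi (s + w) - psi (r + w)) / (s - r))).
    + intro v; unfold logE; destruct (Req_EM_T (r + v) (s + v)); [lra|].
      f_equal; ring.
    + auto_derive; repeat split; auto using ex_derive_psi; lra.
Qed.
End LogPowerSum.

Lemma exp_reflection_constant x y : 0 < x -> 0 < y -> exp (2 * ln x + (ln y - ln x)) = x * y.
Proof.
  intros hx hy. replace (2 * ln x + (ln y - ln x)) with (ln x + ln y) by ring.
  rewrite exp_plus, !exp_ln; auto.
Qed.

Lemma Rpower_exp z e : Rpower (exp z) e = exp (e * z).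
Proof. unfold Rpower; rewrite ln_exp; reflexivity. Qed.

Lemma Rpower_diff x y t : 0 < x -> 0 < y ->
  Rpower y t - Rpower x t = t * (ln y - ln x) * exp (psi (ln x) (ln y - ln x) t).
Proof.
  intros hx hy. unfold Rpower, psi.
  rewrite exp_plus, exp_ln by apply K_pos.
  replace (t * ln y) with (t * ln x + t * (ln y - ln x)) by ring.
  rewrite exp_plus, (exp_K (t * (ln y - ln x))). ring.
Qed.

Lemma ln_neq x y : 0 < x -> 0 < y -> x <> y -> ln y - ln x <> 0.
Proof. intros hx hy hxy H. apply hxy, ln_inv; auto; lra. Qed.

Lemma E_offdiag x y p q : 0 < x -> 0 < y -> x <> y -> p <> q ->
  E p q x y = exp ((psi (ln x) (ln y - ln x) q - psi (ln x) (ln y - ln x) p) / (q - p)).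
Proof.
  intros hx hy hxy hpq. assert (hc := ln_neq x y hx hy hxy).
  unfold E. destruct (Req_EM_T x y) as [|_]; [contradiction|].
  rewrite !Rpower_diff by auto.
  set (ps := psi (ln x) (ln y - ln x)).
  destruct (Req_EM_T p 0) as [->|hp]; [|destruct (Req_EM_T q 0) as [->|hq]].
  - destruct (Req_EM_T q 0) as [->|hq]; [contradiction|].
    replace (1 / q * (q * (ln y - ln x) * exp (ps q) / (ln y - ln x))) with (exp (ps q))
      by (field; auto).
    rewrite Rpower_exp. unfold ps; rewrite psi_0. f_equal; field; auto.
  - replace (1 / p * (p * (ln y - ln x) * exp (ps p) / (ln y - ln x))) with (exp (ps p))
      by (field; auto).
    rewrite Rpower_exp. unfold ps; rewrite psi_0. f_equal; field; auto.
  - destruct (Req_EM_T p q) as [|_]; [contradiction|].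
    replace (p / q * (q * (ln y - ln x) * exp (ps q) / (p * (ln y - ln x) * exp (ps p))))
      with (exp (ps q - ps p))
      by (unfold Rminus; rewrite exp_plus, exp_Ropp;
          assert (0 < exp (ps p)) by apply exp_pos; field; repeat split; auto; lra).
    rewrite Rpower_exp. f_equal; field; lra.
Qed.

Lemma E_diag x y p : 0 < x -> 0 < y -> x <> y ->
  E p p x y = exp (dpsi (ln x) (ln y - ln x) p).
Proof.
  intros hx hy hxy. assert (hc := ln_neq x y hx hy hxy).
  unfold E, dpsi. destruct (Req_EM_T x y) as [|_]; [contradiction|].
  destruct (Req_EM_T p 0) as [->|hp].
  - destruct (Req_EM_T 0 0) as [_|]; [|lra].
    rewrite Rmult_0_l, dK_0, K_0, <- Rpower_sqrt by (apply Rmult_lt_0_compat; auto).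
    unfold Rpower; rewrite ln_mult by auto. f_equal; field.
  - destruct (Req_EM_T p p) as [_|]; [|lra].
    set (u := p * (ln y - ln x)).
    assert (hu : u <> 0) by (apply Rmult_integral_contrapositive; auto).
    assert (hK := K_pos u). assert (hdK := exp_dK u).
    assert (hy_p : Rpower y p = Rpower x p * exp u)
      by (unfold Rpower, u; rewrite <- exp_plus; f_equal; ring).
    rewrite hy_p. set (X := Rpower x p).
    assert (hX : 0 < X) by apply exp_pos.
    assert (hquot : Rpower x X / Rpower y (X * exp u) = exp (X * ln x - X * exp u * ln y))
      by (unfold Rpower, Rminus, Rdiv; rewrite exp_plus, exp_Ropp; reflexivity).
    rewrite hquot, Rpower_exp, <- exp_plus. f_equal.
    rewrite (exp_K u) in hdK |- *.
    replace (ln y - ln x) with (u / p) by (unfold u; field; auto).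
    replace (ln y) with (ln x + u / p) by (unfold u; field; auto).
    replace (dK u) with ((1 + u * K u - K u) / u) by (rewrite hdK; field; auto).
    assert (hden : X - X * (1 + u * K u) <> 0).
    { replace (X - X * (1 + u * K u)) with (- (X * (u * K u))) by ring.
      apply Ropp_neq_0_compat, Rmult_integral_contrapositive.
      split; [lra | apply Rmult_integral_contrapositive; split; lra]. }
    field. repeat split; auto; lra.
Qed.

Lemma E_exp_logE x y p q : 0 < x -> 0 < y -> x <> y ->
  E p q x y = exp (logE (ln x) (ln y - ln x) p q).
Proof.
  intros hx hy hxy. unfold logE. destruct (Req_EM_T p q) as [<-|hpq].
  - apply E_diag; auto.
  - apply E_offdiag; auto.
Qed.

Lemma F_log_reflection x y r s : 0 < x -> 0 < y ->
  exists (L : R -> R) (k : R),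
    (forall w, F r s x y w = exp (L w)) /\ (forall w, ex_derive L w) /\
    (forall w, L (- w - (s + r)) = k - L w) /\ exp k = x * y.
Proof.
  intros hx hy. destruct (Req_dec x y) as [<-|hxy].
  - exists (fun _ => ln x), (2 * ln x). repeat split.
    + intro w. unfold F, E. rewrite exp_ln by auto.
      destruct (Req_EM_T x x); [reflexivity | lra].
    + intro w. apply ex_derive_const.
    + intro w. ring.
    + replace (2 * ln x) with (ln x + ln x) by ring. rewrite exp_plus, exp_ln; auto.
  - exists (fun w => logE (ln x) (ln y - ln x) (r + w) (s + w)), (2 * ln x + (ln y - ln x)).
    repeat split.
    + intro w. apply E_exp_logE; auto.
    + intro w. apply ex_derive_logE_shift.
    + intro w. replace (r + (- w - (s + r))) with (- (s + w)) by ring.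
      replace (s + (- w - (s + r))) with (- (r + w)) by ring.
      apply logE_opp.
    + apply exp_reflection_constant; auto.
Qed.

Section LogReflection.
Variables (f L : R -> R) (k m : R).
Hypothesis f_exp : forall w, f w = exp (L w).
Hypothesis L_derivable : forall w, ex_derive L w.
Hypothesis L_reflect : forall w, L (- w - m) = k - L w.

Lemma Derive_reflect w : Derive L (- w - m) = Derive L w.
Proof.
  apply (derivative_unique (fun z => k - L (- z - m)) L w).
  - intro z. rewrite L_reflect. ring.
  - auto_derive; [apply L_derivable |].
    change (Derive (fun x : R => L x)) with (Derive L). unfold Rminus; ring.
  - apply Derive_correct, L_derivable.
Qed.

Lemma is_derive_f w : derivable_pt_lim f w (exp (L w) * Derive L w).
Proof.
  apply is_derive_Reals, (is_derive_ext (fun z => exp (L z))); [intro; symmetry; apply f_exp|].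
  auto_derive; [apply L_derivable |].
  change (Derive (fun x : R => L x)) with (Derive L). ring.
Qed.

Lemma log_derivative_reflect w :
  exists d1 d2 : R,
    derivable_pt_lim f w d1 /\ derivable_pt_lim f (- w - m) d2 /\
    d1 / f w = d2 / f (- w - m).
Proof.
  exists (exp (L w) * Derive L w), (exp (L (- w - m)) * Derive L (- w - m)).
  split; [apply is_derive_f | split; [apply is_derive_f |]].
  rewrite !f_exp, Derive_reflect.
  assert (0 < exp (L w)) by apply exp_pos.
  assert (0 < exp (L (- w - m))) by apply exp_pos.
  field; lra.
Qed.

(* The reflection law applied at -w. *)
Lemma product_reflect w : f w * f (- w) = exp k * f w / f (w - m).
Proof.
  assert (Hpair : f (- w) * f (w - m) = exp k).
  { rewrite !f_exp, <- exp_plus. f_equal.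
    replace (w - m) with (- (- w) - m) by ring. rewrite L_reflect. ring. }
  rewrite <- Hpair. assert (0 < f (w - m)) by (rewrite f_exp; apply exp_pos).
  field; lra.
Qed.
End LogReflection.

Theorem mainTheorem7 (x y r s : R) (hx : 0 < x) (hy : 0 < y) :
  forall w : R,
    (exists d1 d2 : R,
        derivable_pt_lim (F r s x y) w d1 /\
        derivable_pt_lim (F r s x y) (- w - (s + r)) d2 /\
        d1 / F r s x y w = d2 / F r s x y (- w - (s + r))) /\
    F r s x y w * F r s x y (- w) =
      x * y * F r s x y w / F r s x y (w - (s + r)).
Proof.
  intro w.
  destruct (F_log_reflection x y r s hx hy) as (L & k & HF & HL & Hrefl & Hk).
  rewrite <- Hk. split.
  - apply (log_derivative_reflect _ L k); auto.
  - apply (product_reflect _ L); auto.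
Qed.
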